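(* Let $X$ be a normal topological space in which every $\Lambda$-set is open, and let $g,f:X\to\mathbb{R}$ be functions such that $f$ is lower semi-contra-continuous, $g$ is upper semi-contra-continuous, and $f\le g$. Then there exists a contra-continuous function $h:X\to\mathbb{R}$ such that $f\le h\le g$.
   Context: A $\Lambda$-set in $X$ is an intersection of open sets. A function $f:X\to\mathbb{R}$ is upper semi-contra-continuous (resp. lower semi-contra-continuous) if $f^{-1}(-\infty,t)$ (resp. $f^{-1}(t,+\infty)$) is closed in $X$ for every real $t$. A function $h:X\to\mathbb{R}$ is contra-continuous if the preimage of every open subset of $\mathbb{R}$ is closed in $X$. $f\le g$ means $f(x)\le g(x)$ for all $x\in X$. *)

From HB Require Import structures.
From mathcomp Require Import all_boot all_order all_algebra.
From mathcomp Require Import all_classical all_reals all_analysis.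
Set Implicit Arguments. Unset Strict Implicit. Unset Printing Implicit Defensive.
Import Order.TTheory GRing.Theory Num.Theory.
Import numFieldNormedType.Exports.
Local Open Scope classical_set_scope.
Local Open Scope ring_scope.

Definition lambda_set {X : topologicalType} (A : set X) : Prop :=
  exists F : set (set X), (forall U, F U -> open U) /\ A = \bigcap_(U in F) U.

Definition upper_semi_contra_continuous {X : topologicalType} {R : realType}
  (f : X -> R) : Prop := forall t : R, closed (f @^-1` [set y | y < t]).

Definition lower_semi_contra_continuous {X : topologicalType} {R : realType}
  (f : X -> R) : Prop := forall t : R, closed (f @^-1` [set y | t < y]).

Definition contra_continuous {X : topologicalType} {R : realType}
  (h : X -> R) : Prop := forall V : set R, open V -> closed (h @^-1` V).

From HB Require Import structures.
From mathcomp Require Import all_boot all_order all_algebra.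
From mathcomp Require Import all_classical all_reals all_analysis.
Import Order.TTheory GRing.Theory Num.Theory.
Import numFieldNormedType.Exports.
Local Open Scope classical_set_scope.
Local Open Scope ring_scope.

(* Call a and b linked when the closures of the points a and b meet.  If
   Lambda-sets are open, the kernel of each point is open, so every set that
   is a union of linkage classes is clopen.  In a normal space, two points in
   the closure of a common point are linked, which makes linkage transitive.
   Semi-contra-continuity makes f antitone and g monotone along point
   closures, so f b <= g a for linked a and b; the supremum of f over the
   linkage class of x is then constant on classes, hence contra-continuous,
   and lies between f and g. *)

Section PointClosures.
Context {X : topologicalType}.
Implicit Types (a b c x y : X) (U S : set X).

Lemma closure_set1_open U a c : open U -> U a -> closure [set c] a -> U c.
Proof.
move=> oU Ua /(_ U (open_nbhs_nbhs (conj oU Ua))) [_ [-> Uc]]; exact: Uc.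
Qed.

Lemma closure_set1_closed {S a} : closed S -> S a -> closure [set a] `<=` S.
Proof.
move=> /closure_id clS Sa; rewrite [in Z in _ `<=` Z]clS.
by apply: closureS => _ ->.
Qed.

Lemma closure_set1_trans a b c :
  closure [set a] b -> closure [set b] c -> closure [set a] c.
Proof. by move=> ab; apply: closure_set1_closed => //; exact: closed_closure. Qed.

Definition kernel y : set X := \bigcap_(U in [set U | open U /\ U y]) U.

Lemma lambda_set_kernel y : lambda_set (kernel y).
Proof. by exists [set U | open U /\ U y]; split => // U []. Qed.

Lemma kernelE y : kernel y = [set x | closure [set x] y].
Proof.
apply/seteqP; split => x /=.
  move=> yx B; rewrite nbhsE => -[U [oU Uy] UB].
  by exists x; split => //; apply: UB; exact: yx.
by move=> xy U [oU Uy]; exact: closure_set1_open xy.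
Qed.

Definition linked a b := closure [set a] `&` closure [set b] !=set0.

Lemma linked_refl a : linked a a.
Proof. by exists a; split; exact: subset_closure. Qed.

Lemma linked_sym a b : linked a b -> linked b a.
Proof. by move=> [d [ad bd]]; exists d. Qed.

Lemma closure_set1_linked x y : closure [set x] y -> linked x y.
Proof. by move=> xy; exists y; split => //; exact: subset_closure. Qed.

Section LambdaOpen.
Hypothesis lambda_open : forall A : set X, lambda_set A -> open A.

Lemma open_closure_set1_saturated (A : set X) :
  (forall x y, closure [set x] y -> A y -> A x) -> open A.
Proof.
move=> satA; have -> : A = \bigcup_(y in A) kernel y.
  apply/seteqP; split => [x Ax|x [y Ay]].
    by exists x => //; rewrite kernelE; exact: subset_closure.
  by rewrite kernelE => /satA; apply.
by apply: bigcup_open => y _; apply: lambda_open; exact: lambda_set_kernel.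
Qed.

Lemma contra_continuous_linked_invariant {R : realType} {h : X -> R} :
  (forall a b, linked a b -> h a = h b) -> contra_continuous h.
Proof.
move=> hL V _; rewrite -openC; apply: open_closure_set1_saturated => x y xy.
by rewrite /= (hL x y) //; exact: closure_set1_linked.
Qed.

End LambdaOpen.

Section Normal.
Hypothesis normalX : normal_space X.

Lemma normal_closure_set1_linked a b c :
  closure [set c] a -> closure [set c] b -> linked a b.
Proof.
move=> ca cb; apply: contrapT => unlinked.
have nbhs_a : set_nbhs (closure [set a]) (~` closure [set b]).
  apply/set_nbhsP; exists (~` closure [set b]); split => //.
  - by rewrite openC; exact: closed_closure.
  - by move=> d ad bd; apply: unlinked; exists d.
have [B /set_nbhsP [U [oU aU UB]] clB] :=
  normalX _ (@closed_closure _ _) _ nbhs_a.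
have Uc : U c.
  by apply: closure_set1_open ca => //; apply: aU; exact: subset_closure.
have clBb : closure B b.
  have clBc : closure B c := subset_closure (UB c Uc).
  exact: (closure_set1_closed (@closed_closure _ B) clBc b cb).
by apply: (clB _ clBb); exact: subset_closure.
Qed.

Lemma linked_trans a b c : linked a b -> linked b c -> linked a c.
Proof.
move=> [d [ad bd]] [e [be ce]].
have [k [dk ek]] := normal_closure_set1_linked _ _ _ bd be.
by exists k; split; [exact: closure_set1_trans ad dk |
                     exact: closure_set1_trans ce ek].
Qed.

End Normal.

Lemma lower_semi_contra_continuous_antitone {R : realType} {f : X -> R} {a d} :
  lower_semi_contra_continuous f -> closure [set a] d -> f a <= f d.
Proof.
move=> lscf ad; rewrite leNgt; apply/negP => lt_da.
have /= := closure_set1_closed (lscf (f d)) lt_da d ad.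
by rewrite ltxx.
Qed.

Lemma upper_semi_contra_continuous_monotone {R : realType} {g : X -> R} {a d} :
  upper_semi_contra_continuous g -> closure [set a] d -> g d <= g a.
Proof.
move=> uscg ad; rewrite leNgt; apply/negP => lt_ad.
have /= := closure_set1_closed (uscg (g d)) lt_ad d ad.
by rewrite ltxx.
Qed.

End PointClosures.

Lemma exists_class_invariant_between {T : Type} {R : realType}
    {L : T -> T -> Prop} {f g : T -> R} :
  (forall a, L a a) -> (forall a b, L a b -> L b a) ->
  (forall a b c, L a b -> L b c -> L a c) ->
  (forall a b, L a b -> f b <= g a) ->
  exists h : T -> R, (forall a b, L a b -> h a = h b) /\
    (forall x, f x <= h x /\ h x <= g x).
Proof.
move=> Lrefl Lsym Ltrans Lfg.
pose E a := [set f b | b in L a].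
have Eub a : ubound (E a) (g a) by move=> _ [b ab <-]; exact: Lfg.
exists (fun a => sup (E a)); split.
  move=> a b ab; congr sup; apply/seteqP; split => _ [c Lc <-]; exists c => //.
    exact: Ltrans (Lsym _ _ ab) Lc.
  exact: Ltrans ab Lc.
move=> x; split; last by apply: ge_sup => //; exists (f x), x.
by apply: ub_le_sup; [exists (g x) | exists x].
Qed.

Theorem corollary2 (R : realType) (X : topologicalType)
  (hnormal : normal_space X)
  (hlambda : forall A : set X, lambda_set A -> open A)
  (g f : X -> R)
  (hf : lower_semi_contra_continuous f)
  (hg : upper_semi_contra_continuous g)
  (hfg : forall x, f x <= g x) :
  exists h : X -> R, contra_continuous h /\ (forall x, f x <= h x /\ h x <= g x).
Proof.
have linked_fg a b : linked a b -> f b <= g a.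
  move=> [d [ad bd]].
  have fbd := lower_semi_contra_continuous_antitone hf bd.
  have gda := upper_semi_contra_continuous_monotone hg ad.
  exact: le_trans fbd (le_trans (hfg d) gda).
have [h [h_inv fhg]] := exists_class_invariant_between (@linked_refl X)
  (@linked_sym X) (linked_trans hnormal) linked_fg.
by exists h; split => //; exact: (contra_continuous_linked_invariant hlambda h_inv).
Qed.
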